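(* Let $D\subset\mathbb{R}$ be an open interval, $t_0\in D$, and let $y:D\to\mathbb{R}$ be analytic with differential transform $Y(i)=\frac{1}{i!}\frac{d^i y}{dt^i}(t_0)$. Let $f(t,y)$ be an analytic function of two variables defined on a neighbourhood of the graph of $y$, not of the product form $f(t,y)=f_0(t)f_1(y)$, and let $F(n)=\frac{1}{n!}\left[\frac{d^n}{dt^n} f(t,y(t))\right]_{t=t_0}$. Regard $F(n)$ as a function of the variables $t_0, Y(0), Y(1),\dots,Y(n)$, namely $F(n)=\frac{1}{n!}\frac{d^n}{d\lambda^n}\big[f(t_0+\lambda,\sum_{i\ge0}Y(i)\lambda^i)\big]_{\lambda=0}$ with $t_0$ and the $Y(i)$ treated as independent variables. Then $F(0)=f(t_0,Y(0))$ and, for $n=1,2,\dots$, $$F(n)=\frac{1}{n}\left(\frac{\partial}{\partial t_0}F(n-1)+\sum_{i=0}^{n-1}(i+1)\,Y(i+1)\,\frac{\partial}{\partial Y(i)}F(n-1)\right).$$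
   Context: The differential transform of an analytic function $g$ at $t_0$ is the sequence $G(i)=\frac{1}{i!}g^{(i)}(t_0)$. *)

From Stdlib Require Import Reals Factorial.
From Coquelicot Require Import Coquelicot.
Open Scope R_scope.

Definition open_ival (a b : Rbar) (t : R) : Prop :=
  Rbar_lt a t /\ Rbar_lt t b.

Definition open2 (U : R -> R -> Prop) : Prop :=
  forall a b, U a b -> exists e, 0 < e /\
    forall x z, Rabs (x - a) < e -> Rabs (z - b) < e -> U x z.

Definition analytic_on (D : R -> Prop) (y : R -> R) : Prop :=
  forall c, D c -> exists (a : nat -> R) (r : R), 0 < r /\
    forall t, Rabs (t - c) < r -> is_pseries a (t - c) (y t).

Definition analytic2_on (U : R -> R -> Prop) (f : R -> R -> R) : Prop :=
  forall a b, U a b -> exists (c : nat -> nat -> R) (r : R), 0 < r /\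
    forall x z, Rabs (x - a) < r -> Rabs (z - b) < r ->
      (forall j, ex_series (fun k => Rabs (c j k * (x - a) ^ j * (z - b) ^ k))) /\
      ex_series (fun j => Series (fun k => Rabs (c j k * (x - a) ^ j * (z - b) ^ k))) /\
      f x z = Series (fun j => Series (fun k => c j k * (x - a) ^ j * (z - b) ^ k)).

Definition diff_transform (g : R -> R) (t0 : R) (i : nat) : R :=
  Derive_n g i t0 / INR (Factorial.fact i).

(* F(n) as a function of the independent variables s (= t0) and Z (= Y):
   F(n) = 1/n! d^n/dl^n [ f (s + l, sum_{i=0}^n Z i l^i) ] at l = 0.
   (Terms Z i with i > n do not influence the n-th derivative at 0.) *)
Definition Ftr (f : R -> R -> R) (n : nat) (s : R) (Z : nat -> R) : R :=
  Derive_n (fun l => f (s + l) (sum_n (fun i => Z i * l ^ i) n)) n 0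
  / INR (Factorial.fact n).

Definition upd (Z : nat -> R) (i : nat) (z : R) : nat -> R :=
  fun j => if Nat.eqb j i then z else Z j.

(* Near a point (s, Z 0) of U the function f is the sum of an absolutely convergent
   double power series, hence infinitely differentiable: its partial derivatives are
   again such sums (for the second variable after interchanging the two summations).
   For a smooth f, write P_m l = trunc_poly Z m l = sum_{i <= m} Z i l^i.  One
   differentiation of l |-> f (s + l) (P_{n+1} l) gives f_t + f_y P_{n+1}'.  The top
   term Z (n+1) l^(n+1) cannot influence an n-th derivative at 0, so P_{n+1} may be
   replaced by P_n, and differentiating F(n) under Derive_n with respect to s and to
   each Z i produces exactly the two kinds of terms on the right-hand side. *)

From Stdlib Require Import Reals Lra Lia Factorial FunctionalExtensionality.
From Coquelicot Require Import Coquelicot.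
Open Scope R_scope.

(* Coquelicot states sums at the carrier of an abstract structure, which [ring] and
   [field] do not recognise. *)
Ltac R_eq := match goal with |- @eq _ ?a ?b => change (@eq R a b) end.

(** * Smooth functions of two variables *)

Lemma open2_locally_2d (W : R -> R -> Prop) x y :
  open2 W -> W x y -> locally_2d W x y.
Proof.
  intros HW Hxy. destruct (HW x y Hxy) as (e & He & HWe).
  exists (mkposreal e He). exact HWe.
Qed.

Lemma open2_locally_slice (W : R -> R -> Prop) x y :
  open2 W -> W x y -> locally y (fun z => W x z).
Proof. intros HW Hxy. apply locally_2d_1d_const_x, open2_locally_2d; auto. Qed.

Fixpoint C2_on (n : nat) (W : R -> R -> Prop) (g : R -> R -> R) : Prop :=
  match n with
  | O => True
  | S m => exists gx gy : R -> R -> R,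
      (forall x y, W x y -> differentiable_pt_lim g x y (gx x y) (gy x y)) /\
      C2_on m W gx /\ C2_on m W gy
  end.

Definition smooth2_on (W : R -> R -> Prop) (g : R -> R -> R) : Prop :=
  forall n, C2_on n W g.

Lemma differentiable_pt_lim_bilinear a b c d x y :
  differentiable_pt_lim (fun u v => a * u * v + b * u + c * v + d) x y
    (a * y + b) (a * x + c).
Proof.
  intros eps.
  assert (Ha : 0 < Rabs a + 1) by (pose proof (Rabs_pos a); lra).
  assert (Hd : 0 < eps / (Rabs a + 1)) by (apply Rdiv_lt_0_compat; [apply cond_pos | lra]).
  exists (mkposreal _ Hd); simpl; intros u v Hu _.
  replace (a * u * v + b * u + c * v + d - (a * x * y + b * x + c * y + d)
           - ((a * y + b) * (u - x) + (a * x + c) * (v - y)))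
    with ((a * (u - x)) * (v - y)) by ring.
  assert (Hux : (Rabs a + 1) * Rabs (u - x) < eps).
  { replace (pos eps) with ((Rabs a + 1) * (eps / (Rabs a + 1))) by (field; lra).
    apply Rmult_lt_compat_l; lra. }
  rewrite !Rabs_mult.
  apply Rmult_le_compat; try apply Rmult_le_pos; try apply Rabs_pos; [|apply Rmax_r].
  pose proof (Rabs_pos (u - x)); nra.
Qed.

(* Constants, projections, sums and products are all of this form. *)
Lemma C2_on_bilinear n W g a b c d :
  (forall u v, g u v = a * u * v + b * u + c * v + d) -> C2_on n W g.
Proof.
  revert g a b c d; induction n as [|n IH]; intros g a b c d Hg; simpl; auto.
  exists (fun _ v => a * v + b), (fun u _ => a * u + c). split; [|split].
  - intros x y _. apply differentiable_pt_lim_ext with (fun u v => a * u * v + b * u + c * v + d).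
    + apply locally_2d_forall. intros; symmetry; apply Hg.
    + apply differentiable_pt_lim_bilinear.
  - apply (IH _ 0 0 a b); intros; ring.
  - apply (IH _ 0 a 0 c); intros; ring.
Qed.

Lemma C2_on_S n W g : C2_on (S n) W g -> C2_on n W g.
Proof.
  revert W g; induction n as [|n IH]; intros W g Hg; simpl; auto.
  destruct Hg as (gx & gy & Hd & Hx & Hy).
  exists gx, gy; auto.
Qed.

Lemma C2_on_comp n : forall W W' g u v,
  C2_on n W' g -> C2_on n W u -> C2_on n W v ->
  (forall x y, W x y -> W' (u x y) (v x y)) ->
  C2_on n W (fun x y => g (u x y) (v x y)).
Proof.
  induction n as [|n IH]; intros W W' g u v Hg Hu Hv HW; simpl; auto.
  assert (Hplus : forall A B, C2_on n W A -> C2_on n W B ->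
                   C2_on n W (fun x y => A x y + B x y)).
  { intros A B HA HB. apply (IH W (fun _ _ => True) Rplus); auto.
    apply C2_on_bilinear with 0 1 1 0; intros; ring. }
  assert (Hmult : forall A B, C2_on n W A -> C2_on n W B ->
                   C2_on n W (fun x y => A x y * B x y)).
  { intros A B HA HB. apply (IH W (fun _ _ => True) Rmult); auto.
    apply C2_on_bilinear with 1 0 0 0; intros; ring. }
  assert (Hu' := C2_on_S _ _ _ Hu). assert (Hv' := C2_on_S _ _ _ Hv).
  destruct Hg as (gx & gy & Hgd & Hgx & Hgy).
  destruct Hu as (ux & uy & Hud & Hux & Huy).
  destruct Hv as (vx & vy & Hvd & Hvx & Hvy).
  exists (fun x y => gx (u x y) (v x y) * ux x y + gy (u x y) (v x y) * vx x y),
         (fun x y => gx (u x y) (v x y) * uy x y + gy (u x y) (v x y) * vy x y).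
  split; [|split].
  - intros x y Hxy. apply differentiable_pt_lim_comp; auto.
  - apply Hplus; apply Hmult; auto; apply (IH W W'); auto.
  - apply Hplus; apply Hmult; auto; apply (IH W W'); auto.
Qed.

Lemma C2_on_ext n W g h : open2 W -> (forall x y, W x y -> g x y = h x y) ->
  C2_on n W g -> C2_on n W h.
Proof.
  intros HW Hgh Hg. destruct n as [|n]; simpl; auto.
  destruct Hg as (gx & gy & Hd & Hx & Hy).
  exists gx, gy; split; auto.
  intros x y Hxy. apply differentiable_pt_lim_ext with g; auto.
  apply locally_2d_impl with W; [apply locally_2d_forall; auto|].
  apply open2_locally_2d; auto.
Qed.

Lemma C2_on_subset n W W' g : (forall x y, W' x y -> W x y) ->
  C2_on n W g -> C2_on n W' g.
Proof.
  revert W W' g; induction n as [|n IH]; intros W W' g HW Hg; simpl; auto.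
  destruct Hg as (gx & gy & Hd & Hx & Hy).
  exists gx, gy; split; [|split]; eauto.
Qed.

Lemma smooth2_on_bilinear (W : R -> R -> Prop) g a b c d :
  (forall u v, g u v = a * u * v + b * u + c * v + d) -> smooth2_on W g.
Proof. intros Hg n. apply C2_on_bilinear with a b c d; auto. Qed.

Lemma smooth2_on_const (W : R -> R -> Prop) c : smooth2_on W (fun _ _ => c).
Proof. apply smooth2_on_bilinear with 0 0 0 c; intros; ring. Qed.

Lemma smooth2_on_fst (W : R -> R -> Prop) : smooth2_on W (fun x _ => x).
Proof. apply smooth2_on_bilinear with 0 1 0 0; intros; ring. Qed.

Lemma smooth2_on_snd (W : R -> R -> Prop) : smooth2_on W (fun _ y => y).
Proof. apply smooth2_on_bilinear with 0 0 1 0; intros; ring. Qed.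

Lemma smooth2_on_comp (W W' : R -> R -> Prop) g u v :
  smooth2_on W' g -> smooth2_on W u -> smooth2_on W v ->
  (forall x y, W x y -> W' (u x y) (v x y)) ->
  smooth2_on W (fun x y => g (u x y) (v x y)).
Proof. intros Hg Hu Hv HW n. apply C2_on_comp with W'; auto. Qed.

Lemma smooth2_on_plus (W : R -> R -> Prop) g h : smooth2_on W g -> smooth2_on W h ->
  smooth2_on W (fun x y => g x y + h x y).
Proof.
  intros Hg Hh. apply (smooth2_on_comp W (fun _ _ => True) Rplus); auto.
  apply smooth2_on_bilinear with 0 1 1 0; intros; ring.
Qed.

Lemma smooth2_on_minus (W : R -> R -> Prop) g h : smooth2_on W g -> smooth2_on W h ->
  smooth2_on W (fun x y => g x y - h x y).
Proof.
  intros Hg Hh. apply (smooth2_on_comp W (fun _ _ => True) Rminus); auto.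
  apply smooth2_on_bilinear with 0 1 (-1) 0; intros; ring.
Qed.

Lemma smooth2_on_mult (W : R -> R -> Prop) g h : smooth2_on W g -> smooth2_on W h ->
  smooth2_on W (fun x y => g x y * h x y).
Proof.
  intros Hg Hh. apply (smooth2_on_comp W (fun _ _ => True) Rmult); auto.
  apply smooth2_on_bilinear with 1 0 0 0; intros; ring.
Qed.

Lemma smooth2_on_pow (W : R -> R -> Prop) g m :
  smooth2_on W g -> smooth2_on W (fun x y => g x y ^ m).
Proof.
  intros Hg. induction m as [|m IH]; simpl.
  - apply smooth2_on_const.
  - apply smooth2_on_mult; auto.
Qed.

Lemma smooth2_on_sum_n (W : R -> R -> Prop) (F : nat -> R -> R -> R) N :
  (forall i, smooth2_on W (F i)) ->
  smooth2_on W (fun x y => sum_n (fun i => F i x y) N).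
Proof.
  intros HF. induction N as [|N IH].
  - replace (fun x y => sum_n (fun i => F i x y) 0) with (F 0%nat); auto.
    do 2 (apply functional_extensionality; intro). now rewrite sum_O.
  - replace (fun x y => sum_n (fun i => F i x y) (S N))
      with (fun x y => sum_n (fun i => F i x y) N + F (S N) x y).
    + apply smooth2_on_plus; auto.
    + do 2 (apply functional_extensionality; intro). now rewrite sum_Sn.
Qed.

Lemma smooth2_on_ext (W : R -> R -> Prop) g h :
  open2 W -> (forall x y, W x y -> g x y = h x y) ->
  smooth2_on W g -> smooth2_on W h.
Proof. intros HW Hgh Hg n. apply C2_on_ext with g; auto. Qed.

Lemma smooth2_on_subset (W W' : R -> R -> Prop) g : (forall x y, W' x y -> W x y) ->
  smooth2_on W g -> smooth2_on W' g.
Proof. intros HW Hg n. apply C2_on_subset with W; auto. Qed.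

Lemma smooth2_on_partials (W : R -> R -> Prop) g : open2 W -> smooth2_on W g ->
  exists gx gy : R -> R -> R,
    (forall x y, W x y -> differentiable_pt_lim g x y (gx x y) (gy x y)) /\
    smooth2_on W gx /\ smooth2_on W gy.
Proof.
  intros HW Hg. destruct (Hg 1%nat) as (gx & gy & Hd & _ & _).
  exists gx, gy. split; [exact Hd|].
  split; intros n; destruct (Hg (S n)) as (gx' & gy' & Hd' & Hx' & Hy').
  - apply C2_on_ext with gx'; auto. intros x y Hxy.
    destruct (differentiable_pt_lim_unique _ _ _ _ _ (Hd' x y Hxy)) as [E1 _].
    destruct (differentiable_pt_lim_unique _ _ _ _ _ (Hd x y Hxy)) as [E2 _]. congruence.
  - apply C2_on_ext with gy'; auto. intros x y Hxy.
    destruct (differentiable_pt_lim_unique _ _ _ _ _ (Hd' x y Hxy)) as [_ E1].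
    destruct (differentiable_pt_lim_unique _ _ _ _ _ (Hd x y Hxy)) as [_ E2]. congruence.
Qed.

Ltac smooth2 :=
  repeat (cbv beta; match goal with
  | H : smooth2_on ?W ?g |- smooth2_on ?W ?g => exact H
  | |- smooth2_on _ (fun _ _ => ?c) => apply smooth2_on_const
  | |- smooth2_on _ (fun x _ => x) => apply smooth2_on_fst
  | |- smooth2_on _ (fun _ y => y) => apply smooth2_on_snd
  | |- smooth2_on _ (fun _ _ => _ + _) => apply smooth2_on_plus
  | |- smooth2_on _ (fun _ _ => _ - _) => apply smooth2_on_minus
  | |- smooth2_on _ (fun _ _ => _ * _) => apply smooth2_on_mult
  | |- smooth2_on _ (fun _ _ => _ ^ _) => apply smooth2_on_pow
  | |- smooth2_on _ (fun _ _ => sum_n _ _) => apply smooth2_on_sum_n; intro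
  | H : smooth2_on ?W' ?g |- smooth2_on _ (fun x y => ?g _ _) =>
      apply (smooth2_on_comp _ W' g); [exact H | | | try (intros ? ? ?; assumption)]
  end).

Lemma differentiable_pt_lim_is_derive_1 g x y lx ly :
  differentiable_pt_lim g x y lx ly -> is_derive (fun t => g t y) x lx.
Proof.
  intros H. apply is_derive_Reals.
  replace lx with (lx * 1 + ly * 0) by ring.
  apply (derivable_pt_lim_comp_2d g (fun t => t) (fun _ => y)); auto.
  - apply derivable_pt_lim_id.
  - apply derivable_pt_lim_const.
Qed.

Lemma differentiable_pt_lim_is_derive_2 g x y lx ly :
  differentiable_pt_lim g x y lx ly -> is_derive (fun t => g x t) y ly.
Proof.
  intros H. apply is_derive_Reals.
  replace ly with (lx * 0 + ly * 1) by ring.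
  apply (derivable_pt_lim_comp_2d g (fun _ => x) (fun t => t)); auto.
  - apply derivable_pt_lim_const.
  - apply derivable_pt_lim_id.
Qed.

Lemma smooth2_on_continuity W g x y : smooth2_on W g -> W x y -> continuity_2d_pt g x y.
Proof.
  intros Hg Hxy. destruct (Hg 1%nat) as (gx & gy & Hd & _ & _).
  apply differentiable_continuity_pt. exists (gx x y), (gy x y). auto.
Qed.

Lemma open2_preimage W u v : open2 W ->
  smooth2_on (fun _ _ => True) u -> smooth2_on (fun _ _ => True) v ->
  open2 (fun x y => W (u x y) (v x y)).
Proof.
  intros HW Hu Hv x y Hxy. destruct (HW _ _ Hxy) as (e & He & HWe).
  assert (Hl : locally_2d (fun a b => W (u a b) (v a b)) x y).
  { apply locally_2d_impl with
      (fun a b => Rabs (u a b - u x y) < e /\ Rabs (v a b - v x y) < e).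
    - apply locally_2d_forall. intros a b [Ha Hb]. auto.
    - apply locally_2d_and;
        [apply (smooth2_on_continuity _ u x y Hu I (mkposreal e He))
        |apply (smooth2_on_continuity _ v x y Hv I (mkposreal e He))]. }
  destruct Hl as [d Hd]. exists d; split; [apply cond_pos | auto].
Qed.

Lemma C2_on_ex_diff_n n : forall W g x y, open2 W -> C2_on (S n) W g -> W x y ->
  ex_diff_n g n x y.
Proof.
  induction n as [|n IH]; intros W g x y HW Hg Hxy;
    destruct Hg as (gx & gy & Hd & Hx & Hy); split;
    try (apply differentiable_continuity_pt; exists (gx x y), (gy x y); auto).
  - exact I.
  - assert (Egx : locally_2d (fun u v => gx u v = Derive (fun z => g z v) u) x y).
    { apply locally_2d_impl with W; [|apply open2_locally_2d; auto].
      apply locally_2d_forall. intros u v Huv. symmetry.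
      apply is_derive_unique, (differentiable_pt_lim_is_derive_1 _ _ _ _ (gy u v)); auto. }
    assert (Egy : locally_2d (fun u v => gy u v = Derive (fun z => g u z) v) x y).
    { apply locally_2d_impl with W; [|apply open2_locally_2d; auto].
      apply locally_2d_forall. intros u v Huv. symmetry.
      apply is_derive_unique, (differentiable_pt_lim_is_derive_2 _ _ _ (gx u v)); auto. }
    split; [|split; [|split]].
    + exists (gx x y). apply differentiable_pt_lim_is_derive_1 with (gy x y); auto.
    + exists (gy x y). apply differentiable_pt_lim_is_derive_2 with (gx x y); auto.
    + apply ex_diff_n_ext_loc with gx; [exact Egx | apply IH with W; auto].
    + apply ex_diff_n_ext_loc with gy; [exact Egy | apply IH with W; auto].
Qed.

Lemma smooth2_on_Derive_n_2 W g k : open2 W -> smooth2_on W g ->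
  exists gk, smooth2_on W gk /\
    forall x y, W x y -> Derive_n (fun z => g x z) k y = gk x y.
Proof.
  intros HW Hg. induction k as [|k (gk & Hgk & Ek)].
  - exists g; split; auto.
  - destruct (smooth2_on_partials W gk HW Hgk) as (gx & gy & Hd & _ & Hgy).
    exists gy; split; auto. intros x y Hxy. simpl.
    rewrite (Derive_ext_loc _ (fun z => gk x z)).
    + apply is_derive_unique, differentiable_pt_lim_is_derive_2 with (gx x y); auto.
    + apply filter_imp with (fun z => W x z); [auto | apply open2_locally_slice; auto].
Qed.

Lemma smooth2_on_ex_derive_n_2 W g x y k : open2 W -> smooth2_on W g -> W x y ->
  ex_derive_n (fun z => g x z) k y.
Proof.
  intros HW Hg Hxy. destruct k as [|k]; simpl; auto.
  destruct (smooth2_on_Derive_n_2 W g k HW Hg) as (gk & Hgk & Ek).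
  destruct (smooth2_on_partials W gk HW Hgk) as (gx & gy & Hd & _ & _).
  apply ex_derive_ext_loc with (fun z => gk x z).
  - apply filter_imp with (fun z => W x z); [|apply open2_locally_slice; auto].
    intros; symmetry; auto.
  - exists (gy x y). apply differentiable_pt_lim_is_derive_2 with (gx x y); auto.
Qed.

Lemma is_derive_Derive_n_param W K p y m : open2 W -> smooth2_on W K -> W p y ->
  is_derive (fun q => Derive_n (fun l => K q l) m y) p
    (Derive_n (fun l => Derive (fun t => K t l) p) m y).
Proof.
  intros HW HK Hpy.
  assert (HL : locally_2d (ex_diff_n K (S m)) p y).
  { apply locally_2d_impl with W; [|apply open2_locally_2d; auto].
    apply locally_2d_forall. intros. apply C2_on_ex_diff_n with W; auto. }
  assert (HE : ex_derive (fun z => partial_derive 0 m K z y) p).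
  { apply (ex_diff_n_ex_deriv_inf_1 (S m) 0 m); [lia|].
    apply C2_on_ex_diff_n with W; auto. }
  pose proof (Derive_partial_derive_aux1 m K p y HL) as HD.
  unfold partial_derive in HE, HD. simpl in HE, HD.
  rewrite <- HD. exact (Derive_correct _ _ HE).
Qed.

Lemma continuity_2d_pt_bounded_partials g gx gy x0 y0 d M : 0 < d ->
  (forall x y, Rabs (x - x0) < d -> Rabs (y - y0) < d ->
     is_derive (fun t => g t y) x (gx x y) /\ is_derive (fun t => g x t) y (gy x y) /\
     Rabs (gx x y) <= M /\ Rabs (gy x y) <= M) ->
  continuity_2d_pt g x0 y0.
Proof.
  intros Hd H eps.
  assert (HM : 0 <= M).
  { destruct (H x0 y0) as (_ & _ & HM & _); rewrite ?Rminus_eq_0, ?Rabs_R0; auto.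
    pose proof (Rabs_pos (gx x0 y0)). lra. }
  assert (Hdelta : 0 < Rmin d (eps / (2 * (M + 1)))).
  { apply Rmin_pos; auto. apply Rdiv_lt_0_compat; [apply cond_pos | lra]. }
  exists (mkposreal _ Hdelta). simpl. intros u v Hu Hv.
  pose proof (Rmin_l d (eps / (2 * (M + 1)))). pose proof (Rmin_r d (eps / (2 * (M + 1)))).
  assert (P1 : Rabs (g u v - g x0 v) <= M * Rabs (u - x0)).
  { apply (bounded_variation (fun t => g t v) (fun t => gx t v)). intros t Ht.
    destruct (H t v) as (A & _ & B & _); auto; lra. }
  assert (P2 : Rabs (g x0 v - g x0 y0) <= M * Rabs (v - y0)).
  { apply (bounded_variation (fun t => g x0 t) (fun t => gy x0 t)). intros t Ht.
    destruct (H x0 t) as (_ & A & _ & B); auto; [rewrite Rminus_eq_0, Rabs_R0 |]; lra. }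
  replace (g u v - g x0 y0) with ((g u v - g x0 v) + (g x0 v - g x0 y0)) by ring.
  eapply Rle_lt_trans; [apply Rabs_triang|].
  assert (Hsmall : (M + 1) * (eps / (2 * (M + 1))) = eps / 2) by (field; lra).
  pose proof (Rabs_pos (u - x0)). pose proof (Rabs_pos (v - y0)).
  assert ((M + 1) * Rabs (u - x0) < eps / 2) by (rewrite <- Hsmall; apply Rmult_lt_compat_l; lra).
  assert ((M + 1) * Rabs (v - y0) < eps / 2) by (rewrite <- Hsmall; apply Rmult_lt_compat_l; lra).
  destruct eps as [e He]; simpl in *. nra.
Qed.

Lemma differentiable_pt_lim_partials g gx gy x0 y0 :
  locally_2d (fun x y => is_derive (fun t => g t y) x (gx x y)) x0 y0 ->
  is_derive (fun t => g x0 t) y0 (gy x0 y0) ->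
  continuity_2d_pt gx x0 y0 ->
  differentiable_pt_lim g x0 y0 (gx x0 y0) (gy x0 y0).
Proof.
  intros Hx Hy Hc. apply filterdiff_differentiable_pt_lim.
  exact (is_derive_filterdiff g x0 y0 gx (gy x0 y0) (proj1 (locally_2d_locally _ _ _) Hx) Hy
           (proj1 (continuity_2d_pt_filterlim _ _ _) Hc)).
Qed.

(** * Derivatives along families of curves *)

Lemma Derive_n_S_Derive f k x : Derive_n f (S k) x = Derive_n (Derive f) k x.
Proof. rewrite <- Nat.add_1_r, <- Derive_n_comp. reflexivity. Qed.

Lemma is_derive_Derive_n_comp W f fx fy u v du dv n p0 :
  open2 W -> smooth2_on W f ->
  (forall x y, W x y -> differentiable_pt_lim f x y (fx x y) (fy x y)) ->
  smooth2_on (fun _ _ => True) u -> smooth2_on (fun _ _ => True) v ->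
  (forall p l, is_derive (fun q => u q l) p (du l)) ->
  (forall p l, is_derive (fun q => v q l) p (dv l)) ->
  W (u p0 0) (v p0 0) ->
  is_derive (fun p => Derive_n (fun l => f (u p l) (v p l)) n 0) p0
    (Derive_n (fun l => fx (u p0 l) (v p0 l) * du l + fy (u p0 l) (v p0 l) * dv l) n 0).
Proof.
  intros HW Hf Hd Hu Hv Hdu Hdv H0.
  set (W' := fun p l => W (u p l) (v p l)).
  assert (HW' : open2 W') by (unfold W'; apply open2_preimage; auto).
  rewrite <- (Derive_n_ext_loc (fun l => Derive (fun t => f (u t l) (v t l)) p0)).
  - apply is_derive_Derive_n_param with W'; auto.
    apply (smooth2_on_comp W' W); auto;
      apply smooth2_on_subset with (fun _ _ => True); auto.
  - apply filter_imp with (fun l => W' p0 l); [|apply open2_locally_slice; auto].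
    intros l Hl. apply is_derive_unique, is_derive_Reals, derivable_pt_lim_comp_2d;
      [apply Hd, Hl | apply is_derive_Reals, Hdu | apply is_derive_Reals, Hdv].
Qed.

Lemma Derive_n_pow_mul_0 W k : forall g x m, open2 W -> smooth2_on W g -> W x 0 ->
  (k < m)%nat -> Derive_n (fun l => l ^ m * g x l) k 0 = 0.
Proof.
  induction k as [|k IH]; intros g x m HW Hg Hx Hkm.
  - simpl. rewrite pow_i by lia. ring.
  - destruct m as [|m]; [lia|]. rewrite Derive_n_S_Derive.
    destruct (smooth2_on_partials W g HW Hg) as (gx & gy & Hd & _ & Hgy).
    rewrite (Derive_n_ext_loc _ (fun l => l ^ m * (INR (S m) * g x l + l * gy x l))).
    + apply (IH (fun u v => INR (S m) * g u v + v * gy u v) x m HW); auto; [smooth2 | lia].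
    + apply filter_imp with (fun l => W x l); [|apply open2_locally_slice; auto].
      intros l Hl. apply is_derive_unique.
      assert (Hpow : is_derive (fun t => t ^ S m) l (INR (S m) * l ^ m)).
      { replace (INR (S m) * l ^ m) with (INR (S m) * 1 * l ^ pred (S m)) by (simpl pred; ring).
        apply (is_derive_pow (fun t => t)), (is_derive_id l). }
      replace (l ^ m * (INR (S m) * g x l + l * gy x l))
        with (INR (S m) * l ^ m * g x l + l ^ S m * gy x l) by (simpl; ring).
      apply (is_derive_mult (fun t => t ^ S m) (fun t => g x t)); auto.
      + apply differentiable_pt_lim_is_derive_2 with (gx x l); auto.
      + intros; apply Rmult_comm.
Qed.

Lemma Derive_n_high_order_perturbation W h m k c : open2 W -> smooth2_on W h -> W 0 0 ->
  (k < m)%nat -> Derive_n (fun l => h l (c * l ^ m)) k 0 = Derive_n (fun l => h l 0) k 0.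
Proof.
  intros HW Hh H0 Hkm.
  destruct (smooth2_on_partials W h HW Hh) as (hx & hw & Hd & _ & Hhw).
  set (W' := fun p l => W l (p * l ^ m)).
  assert (HW' : open2 W') by (unfold W'; apply open2_preimage; auto; smooth2).
  assert (HW'0 : forall p, W' p 0)
    by (intro; unfold W'; rewrite pow_i by lia; now rewrite Rmult_0_r).
  (* The derivative in the coefficient is the k-th derivative at 0 of a multiple of l ^ m. *)
  assert (Hder : forall p,
    is_derive (fun q => Derive_n (fun l => h l (q * l ^ m)) k 0) p 0).
  { intro p.
    assert (HD := is_derive_Derive_n_comp W h hx hw (fun _ l => l) (fun q l => q * l ^ m)
                    (fun _ => 0) (fun l => l ^ m) k p HW Hh Hd).
    rewrite (Derive_n_ext _ (fun l => l ^ m * hw l (p * l ^ m))) in HD by (intros; ring).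
    rewrite (Derive_n_pow_mul_0 W' k (fun q l => hw l (q * l ^ m)) p m) in HD;
      auto; [| unfold W'; smooth2].
    apply HD; [smooth2 | smooth2 | intros; auto_derive; auto .. | apply HW'0]; ring. }
  pose proof (bounded_variation (fun q => Derive_n (fun l => h l (q * l ^ m)) k 0)
                (fun _ => 0) 0 0 c) as Hvar.
  rewrite Rmult_0_l in Hvar.
  replace (Derive_n (fun l => h l 0) k 0) with (Derive_n (fun l => h l (0 * l ^ m)) k 0)
    by (apply Derive_n_ext; intros; now rewrite Rmult_0_l).
  apply Rminus_diag_uniq, Rabs_eq_0, Rle_antisym; [|apply Rabs_pos].
  apply Hvar. intros; split; [apply Hder | rewrite Rabs_R0; lra].
Qed.

(** * The recursion for smooth functions *)

Definition trunc_poly (Z : nat -> R) (n : nat) (l : R) : R := sum_n (fun i => Z i * l ^ i) n.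

Lemma trunc_poly_0 Z n : trunc_poly Z n 0 = Z 0%nat.
Proof.
  unfold trunc_poly. induction n as [|n IH].
  - rewrite sum_O. simpl. ring.
  - rewrite sum_Sn, IH. simpl. rewrite Rmult_0_l, Rmult_0_r. apply Rplus_0_r.
Qed.

Lemma trunc_poly_S Z n l : trunc_poly Z (S n) l = trunc_poly Z n l + Z (S n) * l ^ S n.
Proof. unfold trunc_poly. now rewrite sum_Sn. Qed.

Lemma trunc_poly_upd Z i z n l : (i <= n)%nat ->
  trunc_poly (upd Z i z) n l = trunc_poly Z n l + (z - Z i) * l ^ i.
Proof.
  intros Hi. unfold trunc_poly, upd. induction n as [|n IH].
  - assert (i = 0%nat) by lia. subst. rewrite !sum_O. simpl. ring.
  - rewrite !sum_Sn. destruct (Nat.eq_dec i (S n)) as [->|Hne].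
    + rewrite Nat.eqb_refl.
      rewrite (sum_n_ext_loc (fun j => (if Nat.eqb j (S n) then z else Z j) * l ^ j)
                 (fun j => Z j * l ^ j)).
      * change plus with Rplus. ring.
      * intros j Hj. replace (Nat.eqb j (S n)) with false; auto.
        symmetry; apply Nat.eqb_neq; lia.
    + rewrite IH by lia. replace (Nat.eqb (S n) i) with false.
      * change plus with Rplus. ring.
      * symmetry; apply Nat.eqb_neq; lia.
Qed.

Lemma is_derive_trunc_poly Z n l :
  is_derive (trunc_poly Z (S n)) l (trunc_poly (fun i => INR (i + 1) * Z (i + 1)%nat) n l).
Proof.
  unfold trunc_poly. induction n as [|n IH].
  - apply is_derive_ext with (fun t => Z 0%nat + Z 1%nat * t).
    + intros t. rewrite sum_Sn, sum_O. simpl. change plus with Rplus. ring.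
    + auto_derive; auto. rewrite sum_O. simpl. ring.
  - rewrite sum_Sn.
    apply is_derive_ext
      with (fun t => sum_n (fun i => Z i * t ^ i) (S n) + Z (S (S n)) * t ^ S (S n)).
    + intros t. now rewrite sum_Sn with (n := S n).
    + apply (is_derive_plus _ (fun t => Z (S (S n)) * t ^ S (S n))); auto.
      rewrite Nat.add_1_r.
      replace (INR (S (S n)) * Z (S (S n)) * l ^ S n)
        with (Z (S (S n)) * (INR (S (S n)) * 1 * l ^ pred (S (S n)))) by (simpl pred; ring).
      apply is_derive_scal, (is_derive_pow (fun t => t)), (is_derive_id l).
Qed.

Section Recursion.

Variables (W0 : R -> R -> Prop) (f fx fy : R -> R -> R).
Hypotheses (HW0 : open2 W0) (Hf : smooth2_on W0 f)
  (Hd : forall x y, W0 x y -> differentiable_pt_lim f x y (fx x y) (fy x y))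
  (Hfx : smooth2_on W0 fx) (Hfy : smooth2_on W0 fy).
Variables (s : R) (Z : nat -> R) (n : nat).
Hypothesis Hs : W0 s (Z 0%nat).

Lemma is_derive_Derive_n_shift :
  is_derive (fun s' => Derive_n (fun l => f (s' + l) (trunc_poly Z n l)) n 0) s
    (Derive_n (fun l => fx (s + l) (trunc_poly Z n l)) n 0).
Proof.
  assert (HD := is_derive_Derive_n_comp W0 f fx fy (fun p l => p + l)
                  (fun _ l => trunc_poly Z n l) (fun _ => 1) (fun _ => 0) n s HW0 Hf Hd).
  rewrite (Derive_n_ext _ (fun l => fx (s + l) (trunc_poly Z n l))) in HD by (intros; ring).
  apply HD; [smooth2 | unfold trunc_poly; smooth2 | intros; auto_derive; auto; ring .. |].
  cbv beta. rewrite Rplus_0_r, trunc_poly_0. exact Hs.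
Qed.

Lemma is_derive_Derive_n_coef i : (i <= n)%nat ->
  is_derive (fun z => Derive_n (fun l => f (s + l) (trunc_poly (upd Z i z) n l)) n 0) (Z i)
    (Derive_n (fun l => fy (s + l) (trunc_poly Z n l) * l ^ i) n 0).
Proof.
  intros Hi.
  apply is_derive_ext with
    (fun z => Derive_n (fun l => f (s + l) (trunc_poly Z n l + (z - Z i) * l ^ i)) n 0).
  { intros z. apply Derive_n_ext. intros l. now rewrite trunc_poly_upd. }
  assert (HD := is_derive_Derive_n_comp W0 f fx fy (fun _ l => s + l)
                  (fun z l => trunc_poly Z n l + (z - Z i) * l ^ i) (fun _ => 0)
                  (fun l => l ^ i) n (Z i) HW0 Hf Hd).
  rewrite (Derive_n_ext _ (fun l => fy (s + l) (trunc_poly Z n l) * l ^ i)) in HD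
    by (intros; rewrite Rminus_eq_0, Rmult_0_l, Rplus_0_r; ring).
  apply HD; [smooth2 | unfold trunc_poly; smooth2 | intros; auto_derive; auto; ring .. |].
  cbv beta. rewrite Rplus_0_r, trunc_poly_0, Rminus_eq_0, Rmult_0_l, Rplus_0_r. exact Hs.
Qed.

Let Wcurve : R -> R -> Prop := fun _ l => W0 (s + l) (trunc_poly Z n l).

Lemma open2_Wcurve : open2 Wcurve.
Proof. unfold Wcurve. apply open2_preimage; auto; unfold trunc_poly; smooth2. Qed.

Lemma locally_Wcurve : locally 0 (Wcurve 0).
Proof.
  apply open2_locally_slice; [apply open2_Wcurve|].
  unfold Wcurve. rewrite Rplus_0_r, trunc_poly_0. exact Hs.
Qed.

Lemma ex_derive_n_Wcurve (G : R -> R) k t :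
  smooth2_on Wcurve (fun _ l => G l) -> Wcurve 0 t -> ex_derive_n G k t.
Proof.
  intros HG Ht.
  apply (smooth2_on_ex_derive_n_2 Wcurve (fun _ l => G l) 0); auto using open2_Wcurve.
Qed.

Lemma Derive_n_S_trunc_poly_S :
  Derive_n (fun l => f (s + l) (trunc_poly Z (S n) l)) (S n) 0 =
  Derive_n (fun l => fx (s + l) (trunc_poly Z n l) + fy (s + l) (trunc_poly Z n l) *
                       trunc_poly (fun i => INR (i + 1) * Z (i + 1)%nat) n l) n 0.
Proof.
  set (Q := trunc_poly (fun i => INR (i + 1) * Z (i + 1)%nat) n).
  set (h := fun l w => fx (s + l) (trunc_poly Z n l + w) * 1
                     + fy (s + l) (trunc_poly Z n l + w) * Q l).
  set (Wh := fun l w => W0 (s + l) (trunc_poly Z n l + w)).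
  set (W1 := fun (_ l : R) => W0 (s + l) (trunc_poly Z (S n) l)).
  assert (HW1 : locally 0 (W1 0)).
  { apply open2_locally_slice.
    - unfold W1. apply open2_preimage; auto; unfold trunc_poly; smooth2.
    - unfold W1. rewrite Rplus_0_r, trunc_poly_0. exact Hs. }
  assert (HWh : open2 Wh) by (unfold Wh; apply open2_preimage; auto; unfold trunc_poly; smooth2).
  assert (Hh : smooth2_on Wh h) by (unfold h, Q, trunc_poly; smooth2).
  assert (Wh0 : Wh 0 0) by (unfold Wh; rewrite !Rplus_0_r, trunc_poly_0; exact Hs).
  transitivity (Derive_n (fun l => h l (Z (S n) * l ^ S n)) n 0).
  - rewrite Derive_n_S_Derive. apply Derive_n_ext_loc.
    apply filter_imp with (W1 0); [|exact HW1].
    intros l Hl. unfold h. rewrite <- trunc_poly_S. apply is_derive_unique.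
    apply is_derive_Reals, derivable_pt_lim_comp_2d; [apply Hd, Hl | |];
      apply is_derive_Reals; [auto_derive; auto | apply is_derive_trunc_poly].
  - rewrite (Derive_n_high_order_perturbation Wh h (S n) n (Z (S n))); auto.
    apply Derive_n_ext. intros l. unfold h. now rewrite Rplus_0_r, Rmult_1_r.
Qed.

Lemma Derive_n_S_curve :
  Derive_n (fun l => f (s + l) (trunc_poly Z (S n) l)) (S n) 0 =
  Derive_n (fun l => fx (s + l) (trunc_poly Z n l)) n 0 +
  sum_n (fun i => INR (i + 1) * Z (i + 1)%nat *
                  Derive_n (fun l => fy (s + l) (trunc_poly Z n l) * l ^ i) n 0) n.
Proof.
  rewrite Derive_n_S_trunc_poly_S.
  rewrite (Derive_n_ext _ (fun l => fx (s + l) (trunc_poly Z n l) +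
    sum_n (fun i => INR (i + 1) * Z (i + 1)%nat * (fy (s + l) (trunc_poly Z n l) * l ^ i)) n)).
  - rewrite Derive_n_plus, Derive_n_sum_n;
      try (apply filter_imp with (Wcurve 0); [|apply locally_Wcurve];
           intros; apply ex_derive_n_Wcurve; auto; unfold trunc_poly; smooth2).
    f_equal. apply sum_n_ext. intros i. apply Derive_n_scal_l.
  - intros l. f_equal. symmetry. etransitivity; [|apply (@sum_n_mult_l R_Ring)].
    apply sum_n_ext. intros i. change mult with Rmult. R_eq; ring.
Qed.

Lemma Ftr_S :
  Ftr f (S n) s Z =
    / INR (S n) *
    (Derive (fun s' => Ftr f n s' Z) s +
     sum_n (fun i => INR (i + 1) * Z (i + 1)%nat *
                     Derive (fun z => Ftr f n s (upd Z i z)) (Z i)) n).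
Proof.
  assert (Hfact : INR (fact n) <> 0) by apply INR_fact_neq_0.
  assert (EA : Derive (fun s' => Ftr f n s' Z) s =
               Derive_n (fun l => fx (s + l) (trunc_poly Z n l)) n 0 / INR (fact n)).
  { unfold Ftr, Rdiv. rewrite Derive_scal_l. f_equal.
    apply is_derive_unique, is_derive_Derive_n_shift. }
  assert (EB : forall i, (i <= n)%nat ->
            Derive (fun z => Ftr f n s (upd Z i z)) (Z i) =
            Derive_n (fun l => fy (s + l) (trunc_poly Z n l) * l ^ i) n 0 / INR (fact n)).
  { intros i Hi. unfold Ftr, Rdiv. rewrite Derive_scal_l. f_equal.
    apply is_derive_unique, is_derive_Derive_n_coef, Hi. }
  change (Ftr f (S n) s Z) with
    (Derive_n (fun l => f (s + l) (trunc_poly Z (S n) l)) (S n) 0 / INR (fact (S n))).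
  rewrite Derive_n_S_curve, EA.
  rewrite (sum_n_ext_loc
    (fun i => INR (i + 1) * Z (i + 1)%nat * Derive (fun z => Ftr f n s (upd Z i z)) (Z i))
    (fun i => INR (i + 1) * Z (i + 1)%nat *
              Derive_n (fun l => fy (s + l) (trunc_poly Z n l) * l ^ i) n 0 * / INR (fact n)))
    by (intros i Hi; rewrite EB by exact Hi; unfold Rdiv; R_eq; ring).
  rewrite !sum_n_Reals, <- scal_sum.
  replace (fact (S n)) with (S n * fact n)%nat by reflexivity.
  rewrite mult_INR. R_eq. field. split; [exact Hfact | apply not_0_INR; lia].
Qed.

End Recursion.

(** * Interchanging summations *)

Lemma ex_series_dom (a b : nat -> R) : (forall n, Rabs (a n) <= b n) -> ex_series b ->
  ex_series a.
Proof. intros H Hb. apply (@ex_series_le R_AbsRing R_CompleteNormedModule a b); auto. Qed.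

Lemma ex_series_Rabs_dom (a b : nat -> R) : (forall n, Rabs (a n) <= b n) -> ex_series b ->
  ex_series (fun n => Rabs (a n)).
Proof. intros H Hb. apply ex_series_dom with b; auto. intros; rewrite Rabs_Rabsolu; auto. Qed.

Lemma Series_Rabs_le (a b : nat -> R) : (forall n, Rabs (a n) <= b n) -> ex_series b ->
  Rabs (Series a) <= Series b.
Proof.
  intros H Hb. eapply Rle_trans; [apply Series_Rabs, ex_series_Rabs_dom with b; auto|].
  apply Series_le; auto. intros n; split; auto. apply Rabs_pos.
Qed.

Lemma sum_n_nonneg (a : nat -> R) N : (forall n, 0 <= a n) -> 0 <= sum_n a N.
Proof.
  intros H. induction N as [|N IH]; [rewrite sum_O | rewrite sum_Sn]; auto.
  change plus with Rplus. specialize (H (S N)). lra.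
Qed.

Lemma Series_nonneg (a : nat -> R) : (forall n, 0 <= a n) -> ex_series a -> 0 <= Series a.
Proof.
  intros H Ha. apply (is_lim_seq_le (fun _ => 0) (sum_n a) 0 (Series a));
    [intros; apply sum_n_nonneg; auto | apply is_lim_seq_const | apply Series_correct, Ha].
Qed.

Lemma Series_split (a : nat -> R) J : ex_series a ->
  Series a = sum_n a J + Series (fun k => a (S J + k)%nat).
Proof. intros Ha. rewrite (Series_incr_n a (S J)) by (auto; lia). now rewrite sum_n_Reals. Qed.

Lemma sum_n_le_Series (a : nat -> R) N : (forall n, 0 <= a n) -> ex_series a ->
  sum_n a N <= Series a.
Proof.
  intros H Ha. rewrite (Series_split a N Ha).
  assert (0 <= Series (fun k => a (S N + k)%nat)); [|lra].
  apply Series_nonneg; auto. now apply (ex_series_incr_n a (S N)).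
Qed.

Lemma term_le_Series (a : nat -> R) N : (forall n, 0 <= a n) -> ex_series a -> a N <= Series a.
Proof.
  intros H Ha. eapply Rle_trans; [|apply (sum_n_le_Series a N); auto].
  destruct N as [|N]; [rewrite sum_O; lra|].
  rewrite sum_Sn. change plus with Rplus.
  assert (0 <= sum_n a N) by (apply sum_n_nonneg; auto). lra.
Qed.

Lemma Rabs_sum_n_le_Series (a : nat -> R) N : ex_series (fun n => Rabs (a n)) ->
  Rabs (sum_n a N) <= Series (fun n => Rabs (a n)).
Proof.
  intros Ha. eapply Rle_trans; [rewrite !sum_n_Reals; apply Rsum_abs|].
  rewrite <- sum_n_Reals. apply sum_n_le_Series; auto. intros; apply Rabs_pos.
Qed.

Lemma is_lim_seq_sum_n_Rabs_minus (u : nat -> nat -> R) (L : nat -> R) J :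
  (forall j, is_lim_seq (fun N => u N j) (L j)) ->
  is_lim_seq (fun N => sum_n (fun j => Rabs (u N j - L j)) J) 0.
Proof.
  intros Hl.
  assert (Hj : forall j, is_lim_seq (fun N => Rabs (u N j - L j)) 0).
  { intros j. rewrite <- Rabs_R0, <- (Rminus_diag (L j)).
    exact (is_lim_seq_abs _ _ (is_lim_seq_minus' _ _ _ _ (Hl j) (is_lim_seq_const _))). }
  induction J as [|J IH].
  - apply (is_lim_seq_ext (fun N => Rabs (u N 0%nat - L 0%nat))); auto.
    intros; now rewrite sum_O.
  - apply (is_lim_seq_ext (fun N => sum_n (fun j => Rabs (u N j - L j)) J
                                   + Rabs (u N (S J) - L (S J)))).
    + intros; now rewrite sum_Sn.
    + rewrite <- (Rplus_0_l 0). apply is_lim_seq_plus'; auto.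
Qed.

Lemma is_lim_seq_Series_dom (u : nat -> nat -> R) (B L : nat -> R) :
  (forall N j, Rabs (u N j) <= B j) -> ex_series B ->
  (forall j, is_lim_seq (fun N => u N j) (L j)) ->
  is_lim_seq (fun N => Series (u N)) (Series L).
Proof.
  intros Hb HB Hl.
  assert (HL : forall j, Rabs (L j) <= B j).
  { intros j. apply (is_lim_seq_le _ _ (Rabs (L j)) (B j) (fun N => Hb N j));
      [exact (is_lim_seq_abs _ _ (Hl j)) | apply is_lim_seq_const]. }
  assert (Hd : forall N j, Rabs (u N j - L j) <= 2 * B j).
  { intros N j. specialize (Hb N j). specialize (HL j).
    eapply Rle_trans; [apply Rabs_triang|]. rewrite Rabs_Ropp. lra. }
  assert (H2B : ex_series (fun j => 2 * B j))
    by exact (@ex_series_scal_l R_AbsRing R_NormedModule 2 B HB).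
  apply is_lim_seq_spec. intros eps.
  assert (Heps : 0 < eps / 4) by (destruct eps; simpl; lra).
  assert (HBl : is_lim_seq (sum_n B) (Series B)) by exact (Series_correct _ HB).
  destruct (proj2 (is_lim_seq_spec _ _) HBl (mkposreal _ Heps)) as [J HJ].
  specialize (HJ J (le_n J)). simpl in HJ.
  assert (Heps2 : 0 < eps / 2) by (destruct eps; simpl; lra).
  destruct (proj2 (is_lim_seq_spec _ _) (is_lim_seq_sum_n_Rabs_minus u L J Hl)
              (mkposreal _ Heps2)) as [N0 HN0].
  exists N0. intros N HN. specialize (HN0 N HN). simpl in HN0.
  rewrite Rminus_0_r, Rabs_pos_eq in HN0 by (apply sum_n_nonneg; intros; apply Rabs_pos).
  pose proof (ex_series_Rabs_dom (fun j => u N j - L j) _ (Hd N) H2B) as Hw.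
  rewrite <- Series_minus by (apply ex_series_dom with B; auto).
  eapply Rle_lt_trans; [apply (Series_Rabs_le _ _ (fun j => Rle_refl _) Hw)|].
  rewrite (Series_split _ J Hw).
  assert (Htail : Series (fun k => Rabs (u N (S J + k)%nat - L (S J + k)%nat)) <=
                  2 * Series (fun k => B (S J + k)%nat)).
  { rewrite <- Series_scal_l. apply Series_le; [intros; split; auto; apply Rabs_pos|].
    now apply (ex_series_incr_n (fun j => 2 * B j) (S J)). }
  rewrite (Series_split B J HB) in HJ.
  apply Rabs_lt_between in HJ. destruct eps as [e He]; simpl in *. lra.
Qed.

Lemma is_series_Series_swap (a : nat -> nat -> R) :
  (forall j, ex_series (fun k => Rabs (a j k))) ->
  ex_series (fun j => Series (fun k => Rabs (a j k))) ->
  is_series (fun k => Series (fun j => a j k)) (Series (fun j => Series (a j))).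
Proof.
  intros H1 H2. set (B := fun j => Series (fun k => Rabs (a j k))).
  assert (Hterm : forall j k, Rabs (a j k) <= B j).
  { intros j k. apply (term_le_Series (fun k => Rabs (a j k))); auto. intros; apply Rabs_pos. }
  assert (Hpart : forall N j, Rabs (sum_n (a j) N) <= B j)
    by (intros; apply Rabs_sum_n_le_Series; auto).
  enough (H : is_lim_seq (sum_n (fun k => Series (fun j => a j k)))
                         (Series (fun j => Series (a j)))) by exact H.
  apply (is_lim_seq_ext (fun N => Series (fun j => sum_n (a j) N))).
  - intros N. induction N as [|N IH].
    + rewrite sum_O. apply Series_ext; intros; now rewrite sum_O.
    + rewrite sum_Sn, <- IH. change plus with Rplus.
      rewrite <- Series_plus by (apply ex_series_dom with B; auto).
      apply Series_ext; intros; now rewrite sum_Sn.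
  - apply (is_lim_seq_Series_dom _ B); auto.
    intros j. apply Series_correct, ex_series_Rabs, H1.
Qed.

Lemma Series_swap (a : nat -> nat -> R) :
  (forall j, ex_series (fun k => Rabs (a j k))) ->
  ex_series (fun j => Series (fun k => Rabs (a j k))) ->
  Series (fun j => Series (fun k => a j k)) = Series (fun k => Series (fun j => a j k)).
Proof. intros; symmetry; apply is_series_unique, is_series_Series_swap; auto. Qed.

Lemma ex_series_Rabs_swap (a : nat -> nat -> R) :
  (forall j, ex_series (fun k => Rabs (a j k))) ->
  ex_series (fun j => Series (fun k => Rabs (a j k))) ->
  (forall k, ex_series (fun j => Rabs (a j k))) /\
  ex_series (fun k => Series (fun j => Rabs (a j k))).
Proof.
  intros H1 H2. split.
  - intros k. apply ex_series_Rabs_dom with (fun j => Series (fun k => Rabs (a j k))); auto.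
    intros j. apply (term_le_Series (fun k => Rabs (a j k))); auto. intros; apply Rabs_pos.
  - eexists. apply (is_series_Series_swap (fun j k => Rabs (a j k))).
    + intros j. eapply ex_series_ext; [|apply (H1 j)]. intros; now rewrite Rabs_Rabsolu.
    + eapply ex_series_ext; [|apply H2]. intros j.
      apply Series_ext. intros; now rewrite Rabs_Rabsolu.
Qed.

(** * Absolutely convergent double power series *)

Definition dseries (c : nat -> nat -> R) (x z : R) : R :=
  Series (fun j => Series (fun k => c j k * x ^ j * z ^ k)).

Definition dseries_majorant (c : nat -> nat -> R) (rho : R) : R :=
  Series (fun j => Series (fun k => Rabs (c j k) * rho ^ k) * rho ^ j).

Definition dseries_abs_conv (c : nat -> nat -> R) (r : R) : Prop :=
  forall rho, 0 < rho < r ->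
    (forall j, ex_series (fun k => Rabs (c j k) * rho ^ k)) /\
    ex_series (fun j => Series (fun k => Rabs (c j k) * rho ^ k) * rho ^ j).

Definition coef_transpose (c : nat -> nat -> R) (j k : nat) : R := c k j.
Definition coef_deriv_1 (c : nat -> nat -> R) (j k : nat) : R := INR (S j) * c (S j) k.
Definition coef_deriv_2 (c : nat -> nat -> R) : nat -> nat -> R :=
  coef_transpose (coef_deriv_1 (coef_transpose c)).

Lemma exists_radius_between x z r : Rabs x < r -> Rabs z < r ->
  exists rho, 0 < rho < r /\ Rabs x < rho /\ Rabs z < rho.
Proof.
  intros Hx Hz. exists ((Rmax (Rabs x) (Rabs z) + r) / 2).
  pose proof (Rmax_l (Rabs x) (Rabs z)). pose proof (Rmax_r (Rabs x) (Rabs z)).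
  pose proof (Rmax_lub_lt _ _ _ Hx Hz). pose proof (Rabs_pos x). lra.
Qed.

Lemma INR_S_pow_le q k : 0 <= q < 1 -> INR (S k) * q ^ k <= / (1 - q).
Proof.
  intros Hq. induction k as [|k IH].
  - simpl. rewrite Rmult_1_l. apply (Rmult_le_reg_l (1 - q)); [lra|].
    rewrite Rinv_r by lra. lra.
  - rewrite S_INR. simpl pow.
    assert (q ^ k <= 1) by (rewrite <- (pow1 k); apply pow_incr; lra).
    assert (0 <= q ^ k) by (apply pow_le; lra).
    assert (E : / (1 - q) = q * / (1 - q) + 1) by (field; lra).
    rewrite E. nra.
Qed.

Lemma INR_S_pow_le_pow rho rho' j : 0 < rho < rho' ->
  INR (S j) * rho ^ j <= / (rho' - rho) * rho' ^ S j.
Proof.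
  intros Hr. set (q := rho / rho').
  assert (Hq : 0 <= q < 1).
  { unfold q. split; [apply Rlt_le, Rdiv_lt_0_compat; lra|].
    apply (Rmult_lt_reg_r rho'); [lra|]. unfold Rdiv. rewrite Rmult_assoc, Rinv_l; lra. }
  replace (rho ^ j) with (q ^ j * rho' ^ j)
    by (rewrite <- Rpow_mult_distr; f_equal; unfold q; field; lra).
  replace (/ (rho' - rho) * rho' ^ S j) with (/ (1 - q) * rho' ^ j)
    by (unfold q; simpl; field; lra).
  rewrite <- Rmult_assoc. apply Rmult_le_compat_r; [apply pow_le; lra|].
  apply INR_S_pow_le, Hq.
Qed.

Section AbsConv.

Variables (c : nat -> nat -> R) (r : R).
Hypothesis Hc : dseries_abs_conv c r.

Lemma dseries_abs_conv_terms rho x z : 0 < rho < r -> Rabs x <= rho -> Rabs z <= rho ->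
  (forall j, ex_series (fun k => Rabs (c j k * x ^ j * z ^ k))) /\
  ex_series (fun j => Series (fun k => Rabs (c j k * x ^ j * z ^ k))) /\
  (forall j, Series (fun k => Rabs (c j k * x ^ j * z ^ k)) <=
             Series (fun k => Rabs (c j k) * rho ^ k) * rho ^ j).
Proof.
  intros Hr Hx Hz. destruct (Hc rho Hr) as [H1 H2].
  assert (Hterm : forall j k, Rabs (c j k * x ^ j * z ^ k) <= Rabs (c j k) * rho ^ k * rho ^ j).
  { intros j k. rewrite !Rabs_mult, <- !RPow_abs.
    assert (0 <= Rabs x ^ j <= rho ^ j)
      by (split; [|apply pow_incr; split]; auto using pow_le, Rabs_pos).
    assert (0 <= Rabs z ^ k <= rho ^ k)
      by (split; [|apply pow_incr; split]; auto using pow_le, Rabs_pos).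
    pose proof (Rabs_pos (c j k)).
    replace (Rabs (c j k) * rho ^ k * rho ^ j) with (Rabs (c j k) * rho ^ j * rho ^ k) by ring.
    apply Rmult_le_compat; try apply Rmult_le_pos; try apply Rmult_le_compat_l; tauto. }
  assert (E1 : forall j, ex_series (fun k => Rabs (c j k * x ^ j * z ^ k))).
  { intros j. apply ex_series_Rabs_dom with (fun k => Rabs (c j k) * rho ^ k * rho ^ j); auto.
    apply ex_series_scal_r; auto. }
  assert (E3 : forall j, Series (fun k => Rabs (c j k * x ^ j * z ^ k)) <=
                         Series (fun k => Rabs (c j k) * rho ^ k) * rho ^ j).
  { intros j. rewrite <- Series_scal_r. apply Series_le; [intros; split; auto using Rabs_pos|].
    apply ex_series_scal_r; auto. }
  split; [|split]; auto.
  apply ex_series_dom with (fun j => Series (fun k => Rabs (c j k) * rho ^ k) * rho ^ j); auto.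
  intros j. rewrite Rabs_pos_eq; auto. apply Series_nonneg; auto. intros; apply Rabs_pos.
Qed.

Lemma Rabs_dseries_le rho x z : 0 < rho < r -> Rabs x <= rho -> Rabs z <= rho ->
  Rabs (dseries c x z) <= dseries_majorant c rho.
Proof.
  intros Hr Hx Hz. destruct (dseries_abs_conv_terms rho x z Hr Hx Hz) as (E1 & E2 & E3).
  apply Series_Rabs_le; [|apply (Hc rho Hr)].
  intros j. eapply Rle_trans; [|apply E3]. apply Series_Rabs_le; auto. intros; apply Rle_refl.
Qed.

Lemma dseries_abs_conv_transpose : dseries_abs_conv (coef_transpose c) r.
Proof.
  intros rho Hr. unfold coef_transpose.
  assert (Hx : Rabs rho <= rho) by (rewrite Rabs_pos_eq; lra).
  destruct (dseries_abs_conv_terms rho rho rho Hr Hx Hx) as (E1 & E2 & _).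
  destruct (ex_series_Rabs_swap _ E1 E2) as [F1 F2].
  assert (Hp : forall k, 0 < rho ^ k) by (intros; apply pow_lt; lra).
  assert (Eq : forall j k, Rabs (c k j * rho ^ k * rho ^ j) = Rabs (c k j) * rho ^ k * rho ^ j).
  { intros. now rewrite !Rabs_mult, (Rabs_pos_eq (rho ^ k)), (Rabs_pos_eq (rho ^ j))
      by (apply Rlt_le, Hp). }
  split.
  - intros j. eapply ex_series_ext; [|apply (ex_series_scal_r (/ rho ^ j) _ (F1 j))].
    intros k. cbv beta. rewrite Eq. R_eq. field. apply Rgt_not_eq, Hp.
  - eapply ex_series_ext; [|apply F2]. intros j. rewrite <- Series_scal_r.
    apply Series_ext. intros k. now rewrite Eq.
Qed.

Lemma dseries_transpose x z : Rabs x < r -> Rabs z < r ->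
  dseries c x z = dseries (coef_transpose c) z x.
Proof.
  intros Hx Hz. destruct (exists_radius_between x z r Hx Hz) as (rho & Hr & H1 & H2).
  destruct (dseries_abs_conv_terms rho x z Hr (Rlt_le _ _ H1) (Rlt_le _ _ H2)) as (E1 & E2 & _).
  unfold dseries, coef_transpose. rewrite (Series_swap _ E1 E2).
  apply Series_ext; intros k. apply Series_ext; intros j. ring.
Qed.

Lemma dseries_abs_conv_deriv_1 : dseries_abs_conv (coef_deriv_1 c) r.
Proof.
  intros rho Hr. unfold coef_deriv_1.
  set (rho' := (rho + r) / 2).
  assert (Hr' : 0 < rho' < r) by (unfold rho'; lra).
  assert (Hrr : rho < rho') by (unfold rho'; lra).
  destruct (Hc rho Hr) as [A1 _]. destruct (Hc rho' Hr') as [B1 B2].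
  assert (Hnn : forall s j, 0 <= s -> ex_series (fun k => Rabs (c j k) * s ^ k) ->
                  0 <= Series (fun k => Rabs (c j k) * s ^ k)).
  { intros s j Hs HA. apply Series_nonneg; auto. intros.
    apply Rmult_le_pos; [apply Rabs_pos | apply pow_le; lra]. }
  assert (Hscal : forall j k, Rabs (INR (S j) * c (S j) k) * rho ^ k =
                              INR (S j) * (Rabs (c (S j) k) * rho ^ k))
    by (intros; rewrite Rabs_mult, (Rabs_pos_eq (INR (S j))) by apply pos_INR; ring).
  split.
  - intros j. eapply ex_series_ext; [intros k; symmetry; apply Hscal|].
    apply (@ex_series_scal_l R_AbsRing R_NormedModule), A1.
  - apply ex_series_dom with
      (fun j => / (rho' - rho) * (Series (fun k => Rabs (c (S j) k) * rho' ^ k) * rho' ^ S j)).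
    + intros j. rewrite (Series_ext _ _ (Hscal j)), Series_scal_l.
      assert (Hle : Series (fun k => Rabs (c (S j) k) * rho ^ k) <=
                    Series (fun k => Rabs (c (S j) k) * rho' ^ k)).
      { apply Series_le; auto. intros k. split.
        - apply Rmult_le_pos; [apply Rabs_pos | apply pow_le; lra].
        - apply Rmult_le_compat_l; [apply Rabs_pos | apply pow_incr; lra]. }
      pose proof (Hnn rho (S j) ltac:(lra) (A1 (S j))).
      pose proof (INR_S_pow_le_pow rho rho' j (conj (proj1 Hr) Hrr)).
      pose proof (pos_INR (S j)). pose proof (pow_le rho j ltac:(lra)).
      rewrite Rabs_pos_eq by (repeat apply Rmult_le_pos; lra).
      replace (INR (S j) * Series (fun k => Rabs (c (S j) k) * rho ^ k) * rho ^ j)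
        with (INR (S j) * rho ^ j * Series (fun k => Rabs (c (S j) k) * rho ^ k)) by ring.
      replace (/ (rho' - rho) * (Series (fun k => Rabs (c (S j) k) * rho' ^ k) * rho' ^ S j))
        with (/ (rho' - rho) * rho' ^ S j * Series (fun k => Rabs (c (S j) k) * rho' ^ k))
        by ring.
      apply Rmult_le_compat; auto. apply Rmult_le_pos; auto.
    + apply (@ex_series_scal_l R_AbsRing R_NormedModule).
      exact (proj1 (ex_series_incr_n _ 1) B2).
Qed.

Lemma is_derive_dseries_1 x z : Rabs x < r -> Rabs z < r ->
  is_derive (fun t => dseries c t z) x (dseries (coef_deriv_1 c) x z).
Proof.
  intros Hx Hz. destruct (exists_radius_between x z r Hx Hz) as (rho & Hr & H1 & H2).
  destruct (Hc rho Hr) as [A1 A2].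
  set (b := fun j => Series (fun k => c j k * z ^ k)).
  assert (Hb : forall j, Rabs (b j) <= Series (fun k => Rabs (c j k) * rho ^ k)).
  { intros j. apply Series_Rabs_le; auto. intros k. rewrite Rabs_mult, <- RPow_abs.
    apply Rmult_le_compat_l; [apply Rabs_pos | apply pow_incr; split; [apply Rabs_pos | lra]]. }
  assert (Hrad : Rbar_le rho (CV_radius b)).
  { apply (proj1 (CV_radius_bounded b)). exists (dseries_majorant c rho).
    intros j. rewrite Rabs_mult, <- RPow_abs, (Rabs_pos_eq rho) by lra.
    eapply Rle_trans; [|apply (term_le_Series _ j); auto].
    - apply Rmult_le_compat_r; [apply pow_le; lra | auto].
    - intros i. apply Rmult_le_pos; [|apply pow_le; lra].
      apply Series_nonneg; auto. intros; apply Rmult_le_pos; [apply Rabs_pos | apply pow_le; lra]. }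
  apply is_derive_ext with (PSeries b).
  { intros t. unfold dseries, PSeries, b. apply Series_ext; intros j.
    rewrite <- Series_scal_r. apply Series_ext; intros k. ring. }
  replace (dseries (coef_deriv_1 c) x z) with (PSeries (PS_derive b) x).
  - apply is_derive_PSeries. apply Rbar_lt_le_trans with (Finite rho); auto.
  - unfold PSeries, PS_derive, dseries, coef_deriv_1, b. apply Series_ext; intros j.
    rewrite <- Series_scal_l, <- Series_scal_r. apply Series_ext; intros k. ring.
Qed.

End AbsConv.

Lemma dseries_abs_conv_deriv_2 c r : dseries_abs_conv c r ->
  dseries_abs_conv (coef_deriv_2 c) r.
Proof.
  intros Hc. apply dseries_abs_conv_transpose, dseries_abs_conv_deriv_1,
    dseries_abs_conv_transpose, Hc.
Qed.

Lemma is_derive_dseries_2 c r x z : dseries_abs_conv c r -> Rabs x < r -> Rabs z < r ->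
  is_derive (fun t => dseries c x t) z (dseries (coef_deriv_2 c) x z).
Proof.
  intros Hc Hx Hz. pose proof (dseries_abs_conv_transpose c r Hc) as HcT.
  apply is_derive_ext_loc with (fun t => dseries (coef_transpose c) t x).
  - assert (Hp : 0 < r - Rabs z) by lra. exists (mkposreal _ Hp). intros t Ht.
    change (Rabs (t - z) < r - Rabs z) in Ht. symmetry. apply dseries_transpose with r; auto.
    assert (Rabs t <= Rabs (t - z) + Rabs z)
      by (replace t with ((t - z) + z) at 1 by (R_eq; ring); apply Rabs_triang).
    lra.
  - rewrite (dseries_transpose (coef_deriv_2 c) r); auto using dseries_abs_conv_deriv_2.
    apply is_derive_dseries_1 with r; auto.
Qed.

Lemma C2_on_dseries n : forall c r, dseries_abs_conv c r ->
  C2_on n (fun x z => Rabs x < r /\ Rabs z < r) (dseries c).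
Proof.
  induction n as [|n IH]; intros c r Hc; simpl; auto.
  exists (dseries (coef_deriv_1 c)), (dseries (coef_deriv_2 c)).
  split; [|split; apply IH; auto using dseries_abs_conv_deriv_1, dseries_abs_conv_deriv_2].
  intros x z [Hx Hz].
  destruct (exists_radius_between x z r Hx Hz) as (rho & Hr & H1 & H2).
  set (d := Rmin (rho - Rabs x) (rho - Rabs z)).
  assert (Hd : 0 < d) by (apply Rmin_pos; lra).
  assert (Hin : forall u v, Rabs (u - x) < d -> Rabs (v - z) < d -> Rabs u < rho /\ Rabs v < rho).
  { intros u v Hu Hv. unfold d in Hu, Hv.
    pose proof (Rmin_l (rho - Rabs x) (rho - Rabs z)).
    pose proof (Rmin_r (rho - Rabs x) (rho - Rabs z)).
    pose proof (Rabs_triang (u - x) x). pose proof (Rabs_triang (v - z) z).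
    replace (u - x + x) with u in * by ring. replace (v - z + z) with v in * by ring.
    lra. }
  pose proof (dseries_abs_conv_deriv_1 c r Hc) as Hc1.
  apply differentiable_pt_lim_partials.
  - exists (mkposreal d Hd). intros u v Hu Hv. destruct (Hin u v Hu Hv).
    apply is_derive_dseries_1 with r; auto; lra.
  - apply is_derive_dseries_2 with r; auto.
  - apply continuity_2d_pt_bounded_partials with
      (dseries (coef_deriv_1 (coef_deriv_1 c))) (dseries (coef_deriv_2 (coef_deriv_1 c))) d
      (Rmax (dseries_majorant (coef_deriv_1 (coef_deriv_1 c)) rho)
            (dseries_majorant (coef_deriv_2 (coef_deriv_1 c)) rho)); auto.
    intros u v Hu Hv. destruct (Hin u v Hu Hv).
    split; [|split; [|split]].
    + apply is_derive_dseries_1 with r; auto; lra.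
    + apply is_derive_dseries_2 with r; auto; lra.
    + eapply Rle_trans; [|apply Rmax_l].
      apply Rabs_dseries_le with r; auto using dseries_abs_conv_deriv_1; lra.
    + eapply Rle_trans; [|apply Rmax_r].
      apply Rabs_dseries_le with r; auto using dseries_abs_conv_deriv_2; lra.
Qed.

Lemma dseries_abs_conv_of_sum (c : nat -> nat -> R) a b r :
  (forall x z, Rabs (x - a) < r -> Rabs (z - b) < r ->
     (forall j, ex_series (fun k => Rabs (c j k * (x - a) ^ j * (z - b) ^ k))) /\
     ex_series (fun j => Series (fun k => Rabs (c j k * (x - a) ^ j * (z - b) ^ k)))) ->
  dseries_abs_conv c r.
Proof.
  intros Hc rho Hrho.
  destruct (Hc (a + rho) (b + rho)) as (E1 & E2);
    replace (a + rho - a) with rho in * by ring; replace (b + rho - b) with rho in * by ring;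
    try (rewrite Rabs_pos_eq; lra).
  assert (Hp : forall k, 0 < rho ^ k) by (intros; apply pow_lt; lra).
  assert (Eq : forall j k, Rabs (c j k * rho ^ j * rho ^ k) = Rabs (c j k) * rho ^ k * rho ^ j).
  { intros. rewrite !Rabs_mult, (Rabs_pos_eq (rho ^ k)), (Rabs_pos_eq (rho ^ j))
      by (apply Rlt_le, Hp). ring. }
  split.
  - intros j. eapply ex_series_ext; [|apply (ex_series_scal_r (/ rho ^ j) _ (E1 j))].
    intros k. cbv beta. rewrite Eq. R_eq. field. apply Rgt_not_eq, Hp.
  - eapply ex_series_ext; [|apply E2]. intros j. rewrite <- Series_scal_r.
    apply Series_ext. intros k. now rewrite Eq.
Qed.

Lemma open2_box a b r : open2 (fun x z => Rabs (x - a) < r /\ Rabs (z - b) < r).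
Proof.
  intros x z [Hx Hz]. exists (Rmin (r - Rabs (x - a)) (r - Rabs (z - b))).
  split; [apply Rmin_pos; lra|]. intros u v Hu Hv.
  pose proof (Rmin_l (r - Rabs (x - a)) (r - Rabs (z - b))).
  pose proof (Rmin_r (r - Rabs (x - a)) (r - Rabs (z - b))).
  pose proof (Rabs_triang (u - x) (x - a)). pose proof (Rabs_triang (v - z) (z - b)).
  replace (u - x + (x - a)) with (u - a) in * by ring.
  replace (v - z + (z - b)) with (v - b) in * by ring.
  split; lra.
Qed.

Lemma analytic2_on_smooth2_near U f a b : analytic2_on U f -> U a b ->
  exists W, open2 W /\ W a b /\ smooth2_on W f.
Proof.
  intros Hf Hab. destruct (Hf a b Hab) as (c & r & Hr & Hc).
  assert (Hconv : dseries_abs_conv c r).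
  { apply dseries_abs_conv_of_sum with a b.
    intros x z Hx Hz. destruct (Hc x z Hx Hz) as (E1 & E2 & _). auto. }
  exists (fun x z => Rabs (x - a) < r /\ Rabs (z - b) < r).
  split; [apply open2_box | split].
  - rewrite !Rminus_eq_0, Rabs_R0. lra.
  - apply smooth2_on_ext with (fun x z => dseries c (x - a) (z - b)); [apply open2_box | |].
    + intros x z [Hx Hz]. symmetry. apply (Hc x z Hx Hz).
    + apply (smooth2_on_comp _ (fun x z => Rabs x < r /\ Rabs z < r)); [|smooth2 ..].
      * intros n. apply C2_on_dseries, Hconv.
      * intros x z Hxz. exact Hxz.
Qed.

Lemma Ftr_0 f s Z : Ftr f 0 s Z = f s (Z 0%nat).
Proof.
  unfold Ftr. simpl. rewrite sum_O, Rplus_0_r, Rmult_1_r, Rdiv_1_r. reflexivity.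
Qed.

Theorem theorem2
  (a b : Rbar) (t0 : R) (y : R -> R) (U : R -> R -> Prop) (f : R -> R -> R)
  (Hab : Rbar_lt a b)
  (Ht0 : open_ival a b t0)
  (Hy : analytic_on (open_ival a b) y)
  (HU : open2 U)
  (Hgraph : forall t, open_ival a b t -> U t (y t))
  (Hf : analytic2_on U f)
  (Hnprod : ~ exists (f0 f1 : R -> R), forall t z, U t z -> f t z = f0 t * f1 z) :
  (* regarded as a function of the independent variables (s, Z) *)
  forall (s : R) (Z : nat -> R), U s (Z 0%nat) ->
     Ftr f 0 s Z = f s (Z 0%nat) /\
     forall n : nat,
       Ftr f (S n) s Z =
         / INR (S n) *
         (Derive (fun s' => Ftr f n s' Z) s +
          sum_n (fun i => INR (i + 1) * Z (i + 1)%nat *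
                          Derive (fun z => Ftr f n s (upd Z i z)) (Z i)) n).
Proof.
  intros s Z Hs. split; [apply Ftr_0|]. intros n.
  destruct (analytic2_on_smooth2_near U f s (Z 0%nat) Hf Hs) as (W & HW & HWs & Hsm).
  destruct (smooth2_on_partials W f HW Hsm) as (fx & fy & Hd & Hfx & Hfy).
  exact (Ftr_S W f fx fy HW Hsm Hd Hfx Hfy s Z n HWs).
Qed.
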